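(* Let $(p,f)$ be an SCF-RT rationalizable within the class of all RUM-CFs, and let $x,y\in X$. If $(x,y)\in T(R^{rt})$, then every RUM-CF $(u,g,r)$ rationalizing $(p,f)$ satisfies $u(x)\geq u(y)$. If $(x,y)\in T_P(R^{rt})$, then every such model satisfies $u(x)>u(y)$.
   Context: $X$ is a finite set of options; $C=\{(x,y): x,y\in X,\ x\neq y\}$; $D\subseteq C$ is a fixed non-empty set with $(x,y)\in D\Rightarrow (y,x)\in D$. An SCF $p$ assigns to each $(x,y)\in D$ a number $p(x,y)>0$ with $p(x,y)+p(y,x)=1$. An SCF-RT is a pair $(p,f)$ where $p$ is an SCF and $f$ assigns to each $(x,y)\in D$ a strictly positive density $f(x,y)$ on $\mathbb{R}^+$ with cdf $F(x,y)$. A RUM is a pair $(u,g)$ with $u:X\to\mathbb{R}$ and $g$ assigning to each $(x,y)\in C$ a density $g(x,y)$ on $\mathbb{R}$ (cdf $G(x,y)$) with $\int v\,g(x,y)(v)\,dv=u(x)-u(y)$, $g(x,y)(v)=g(y,x)(-v)$ for all $v$, and connected support. A RUM-CF is $(u,g,r)$ with $(u,g)$ a RUM and $r:\mathbb{R}^{++}\to\mathbb{R}^+$ continuous, strictly decreasing where $r(v)>0$, $\lim_{v\to0}r(v)=\infty$, $\lim_{v\to\infty}r(v)=0$; $r^{-1}(t)$ ($t>0$) is the inverse of $r$ restricted to $\{r>0\}$. It rationalizes $(p,f)$ if for all $(x,y)\in D$: $G(x,y)(0)=p(y,x)$ and $\frac{1-G(x,y)(r^{-1}(t))}{1-G(x,y)(0)}=F(x,y)(t)$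 for all $t>0$. For cdfs $G,H$ on $\mathbb{R}^+$ and $q>0$, $G$ $q$-FSD $H$ means $G(t)\leq qH(t)$ for all $t\geq0$. The binary relation $R^{rt}$ on $X$: $(x,y)\in R^{rt}$ iff either $x=y$, or $(x,y)\in D$ and $F(y,x)$ $q$-FSD $F(x,y)$ with $q=p(x,y)/p(y,x)$. For a binary relation $R$ on $X$, $T(R)$ is its transitive closure ($(x,y)\in T(R)$ iff there is a sequence $x_1=x,x_2,\dots,x_n=y$, $n\geq2$, with $(x_k,x_{k+1})\in R$ for all $k$), and $T_P(R)$ is the asymmetric part of $T(R)$: $(x,y)\in T_P(R)$ iff $(x,y)\in T(R)$ and $(y,x)\notin T(R)$. *)

From HB Require Import structures.
From mathcomp Require Import all_boot all_order all_algebra.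
From mathcomp Require Import all_classical all_reals all_analysis.
From Stdlib Require Import Relations.
Set Implicit Arguments. Unset Strict Implicit. Unset Printing Implicit Defensive.
Import Order.TTheory GRing.Theory Num.Theory.
Import numFieldNormedType.Exports.
Local Open Scope classical_set_scope.
Local Open Scope ring_scope.

Section Defs.
Variable R : realType.
Let mu := @lebesgue_measure R.

Definition pos_density_Rplus (h : R -> R) : Prop :=
  measurable_fun setT h /\ (forall t, 0 <= t -> 0 < h t) /\
  (\int[mu]_(t in `[0%R, +oo[) (h t)%:E = 1)%E.

Definition cdf_Rplus (h : R -> R) (t : R) : R := Rintegral mu `[(0:R), t] h.

Definition density_R (h : R -> R) : Prop :=
  measurable_fun setT h /\ (forall v, 0 <= h v) /\
  (\int[mu]_(v in setT) (h v)%:E = 1)%E.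

Definition cdf_R (h : R -> R) (v : R) : R := Rintegral mu `]-oo, v] h.

Definition dsupport (h : R -> R) : set R := closure [set v | 0 < h v].

Section Choice.
Variable X : finType.

Definition wf_domain (D : rel X) : Prop :=
  (exists x y, D x y) /\ (forall x y, D x y -> x != y) /\
  (forall x y, D x y -> D y x).

Definition is_SCF (D : rel X) (p : X -> X -> R) : Prop :=
  forall x y, D x y -> 0 < p x y /\ p x y + p y x = 1.

Definition is_SCFRT (D : rel X) (p : X -> X -> R) (f : X -> X -> R -> R) : Prop :=
  is_SCF D p /\ forall x y, D x y -> pos_density_Rplus (f x y).

Definition is_RUM (u : X -> R) (g : X -> X -> R -> R) : Prop :=
  forall x y, x != y ->
    [/\ density_R (g x y),
        mu.-integrable setT (fun v => (v * g x y v)%:E),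
        Rintegral mu setT (fun v => v * g x y v) = u x - u y,
        (forall v, g x y v = g y x (- v)) &
        connected (dsupport (g x y))].

Definition is_CF (r : R -> R) : Prop :=
  [/\ (forall v, 0 < v -> {for v, continuous r}),
      (forall v, 0 < v -> 0 <= r v),
      (forall v w, 0 < v -> v < w -> 0 < r v -> 0 < r w -> r w < r v),
      (r x @[x --> 0^'+] --> +oo) &
      (r x @[x --> +oo] --> 0)].

(* (u,g,r) rationalizes (p,f); r^{-1}(t) is the v > 0 with r v = t *)
Definition rationalizes (D : rel X) (p : X -> X -> R) (f : X -> X -> R -> R)
    (u : X -> R) (g : X -> X -> R -> R) (r : R -> R) : Prop :=
  [/\ is_RUM u g, is_CF r &
      forall x y, D x y ->
        cdf_R (g x y) 0 = p y x /\
        (forall t v, 0 < t -> 0 < v -> r v = t ->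
           (1 - cdf_R (g x y) v) / (1 - cdf_R (g x y) 0) = cdf_Rplus (f x y) t)].

Definition rationalizable (D : rel X) (p : X -> X -> R) (f : X -> X -> R -> R) : Prop :=
  exists u g r, rationalizes D p f u g r.

Definition qFSD (q : R) (G H : R -> R) : Prop := forall t, 0 <= t -> G t <= q * H t.

Definition Rrt (D : rel X) (p : X -> X -> R) (f : X -> X -> R -> R) (x y : X) : Prop :=
  x = y \/
  (D x y /\ qFSD (p x y / p y x) (cdf_Rplus (f y x)) (cdf_Rplus (f x y))).

Definition T (Q : X -> X -> Prop) : X -> X -> Prop := clos_trans X Q.
Definition TP (Q : X -> X -> Prop) (x y : X) : Prop := T Q x y /\ ~ T Q y x.
End Choice.
End Defs.

(* If (x, y) is in R^rt, rationalization gives 1 - G(x,y)(v) = p(x,y) F(x,y)(r v)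
   for v > 0, so q-FSD with q = p(x,y)/p(y,x) says that the survival function of
   g(y,x) lies below that of g(x,y) on (0, +oo); where r vanishes, the survival
   functions vanish.  Since g(y,x)(v) = g(x,y)(-v), the layer-cake formula gives
     u(x) - u(y) = E[V] = int_0^oo (1 - G(x,y)) - int_0^oo (1 - G(y,x)) >= 0,
   and equality forces the two right-continuous survival functions to coincide,
   which is exactly (y, x) in R^rt.  Both facts propagate along chains. *)

From HB Require Import structures.
From mathcomp Require Import all_boot all_order all_algebra.
From mathcomp Require Import all_classical all_reals all_analysis.
From mathcomp Require Import measurable_realfun lra.
From Stdlib Require Import Relations.
Set Implicit Arguments. Unset Strict Implicit. Unset Printing Implicit Defensive.
Import Order.TTheory GRing.Theory Num.Theory.
Import numFieldNormedType.Exports.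
Local Open Scope classical_set_scope.
Local Open Scope ring_scope.

Section survival.
Context {R : realType}.
Local Notation mu := (@lebesgue_measure R).

Definition survival (h : R -> R) (v : R) : R := 1 - cdf_R h v.

Variable g : R -> R.
Hypothesis dg : density_R g.

Let mg : measurable_fun [set: R] (EFin \o g).
Proof. by case: dg => m _; exact/measurable_EFinP. Qed.

Let g_ge0 s : (0 <= (g s)%:E)%E.
Proof. by case: dg => _ [g0 _]; rewrite lee_fin. Qed.

Let integral_fin_num (A : set R) : measurable A ->
  (\int[mu]_(s in A) (g s)%:E \is a fin_num)%E.
Proof.
move=> mA; rewrite ge0_fin_numE; last exact: integral_ge0.
case: dg => _ [_ g1]; apply: (@le_lt_trans _ _ 1%E); last exact: ltry.
by rewrite -g1; apply: ge0_subset_integral.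
Qed.

Lemma density_R_integrable : mu.-integrable setT (EFin \o g).
Proof.
have [_ [g0 g1]] := dg; apply/integrableP; split => //.
rewrite (_ : (fun s => _) = (fun s => (g s)%:E)) ?g1 ?ltry //.
by apply/funext => s /=; rewrite ger0_norm.
Qed.

Lemma cdf_RE v : (cdf_R g v)%:E = (\int[mu]_(s in `]-oo, v]) (g s)%:E)%E.
Proof. by rewrite /cdf_R /Rintegral fineK //; exact: integral_fin_num. Qed.

Lemma survivalE v : (survival g v)%:E = (\int[mu]_(s in `]v, +oo[) (g s)%:E)%E.
Proof.
case: dg => _ [_ g1].
rewrite EFinB cdf_RE -g1 -(setUv `]-oo, v]) setCitvl ge0_integral_setU //.
- rewrite addeAC subee ?add0e //; exact: integral_fin_num.
- exact: measurable_funTS mg.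
- by apply/disj_setPS; rewrite -setCitvl setICr.
Qed.

Lemma survival_ge0 v : 0 <= survival g v.
Proof. by rewrite -lee_fin survivalE; exact: integral_ge0. Qed.

Lemma le_cdf_R v w : v <= w -> cdf_R g v <= cdf_R g w.
Proof.
move=> vw; rewrite -lee_fin !cdf_RE; apply: ge0_subset_integral => //.
- exact: measurable_funTS mg.
- by apply: subset_itvl; rewrite bnd_simp.
Qed.

Lemma le_survival v w : v <= w -> survival g w <= survival g v.
Proof. by move=> vw; rewrite lerD2l lerN2 le_cdf_R. Qed.

Lemma measurable_survival (A : set R) : measurable A -> measurable_fun A (survival g).
Proof. by move=> mA; apply: nonincreasing_measurable => // v w; exact: le_survival. Qed.

Lemma cdf_RB w v : w <= v ->
  (cdf_R g v - cdf_R g w)%:E = (\int[mu]_(s in `]w, v]) (g s)%:E)%E.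
Proof.
move=> wv; rewrite EFinB !cdf_RE.
rewrite (@itv_bndbnd_setU _ _ (BInfty _ true) (BRight w) (BRight v)) ?bnd_simp //.
rewrite ge0_integral_setU //.
- rewrite addeAC subee ?add0e //; exact: integral_fin_num.
- exact: measurable_funTS mg.
- apply/disj_setPS => s [] /=; rewrite !in_itv /= => sw /andP[ws _].
  by move: (lt_le_trans ws sw); rewrite ltxx.
Qed.

Lemma survival_right_continuous w e : 0 < e ->
  exists2 d, 0 < d & forall v, w < v < w + d -> survival g w - e < survival g v.
Proof.
move=> e0; have [d [d0 hd]] := integral_normr_continuous density_R_integrable e0.
exists d => // v /andP[wv vwd].
suff : cdf_R g v - cdf_R g w < e by rewrite /survival; lra.
have -> : cdf_R g v - cdf_R g w = Rintegral mu `]w, v] (fun s => `|g s|).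
  have [_ [g0 _]] := dg.
  rewrite /Rintegral; under eq_integral => s _ do rewrite ger0_norm //.
  by rewrite -cdf_RB // ltW.
apply: hd => //; change (mu `]w, v] < d%:E)%E.
by rewrite lebesgue_measure_itv /= lte_fin wv -EFinD lte_fin ltrBlDl.
Qed.

End survival.

Section first_moment.
Context {R : realType}.
Local Notation mu := (@lebesgue_measure R).

Lemma layer_cake (g : R -> R) : measurable_fun [set: R] g -> (forall s, 0 <= g s) ->
  (\int[mu]_(s in `[0%R, +oo[) (s * g s)%:E =
   \int[mu]_(v in `[0%R, +oo[) \int[mu]_(s in `]v, +oo[) (g s)%:E)%E.
Proof.
move=> mg g0.
(* Tonelli for the indicator of {(s, v) | 0 <= v < s}. *)
pose A := [set p : R * R | 0 <= p.2 /\ p.2 < p.1].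
have mA : measurable A.
  rewrite [X in measurable X](_ : _ = (fun p : R * R => 0 <= p.2) @^-1` [set true]
                                  `&` (fun p : R * R => p.2 < p.1) @^-1` [set true]).
    apply: measurableI.
    - by rewrite -[X in measurable X]setTI; apply: measurable_fun_ler.
    - by rewrite -[X in measurable X]setTI; apply: measurable_fun_ltr.
  by apply/seteqP; split => q /=.
pose F (q : R * R) := (\1_A q * g q.1)%:E.
have mF : measurable_fun setT F.
  apply/measurable_EFinP/measurable_funM; first exact: measurable_indic.
  exact: measurableT_comp.
have F0 q : (0 <= F q)%E by rewrite lee_fin mulr_ge0 // indicE.
have indA s v : \1_A (s, v) = \1_`[0%R, s[ v :> R.
  rewrite !indicE; congr (nat_of_bool _)%:R.
  apply/idP/idP => /set_mem; rewrite /= ?in_itv /=.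
  - by case=> v0 vs; apply: mem_set; rewrite /= in_itv /= v0 vs.
  - by move=> /andP[v0 vs]; apply: mem_set.
transitivity (\int[mu]_s \int[mu]_v F (s, v))%E.
  rewrite integral_mkcond; apply: eq_integral => s _ /=.
  under eq_integral => v _ do rewrite /F indA /= EFinM.
  rewrite ge0_integralZr //=; [|exact/measurable_EFinP/measurable_indic|by rewrite lee_fin].
  rewrite integral_indic //= setIT lebesgue_measure_itv /= patchE lte_fin.
  case: (ltgtP 0 s) => s0.
  - by rewrite mem_set /= ?in_itv /= ?(ltW s0) // oppr0 adde0 EFinM.
  - by rewrite ifF ?mul0e //; apply: memNset; rewrite /= in_itv /= leNgt s0.
  - by rewrite -s0 mul0e mem_set /= ?in_itv /= ?lexx // mul0r.
rewrite (@fubini_tonelli _ _ _ _ R mu mu F mF F0) [RHS]integral_mkcond.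
apply: eq_integral => v _ /=.
rewrite patchE; case: (leP 0 v) => v0.
- rewrite mem_set /= ?in_itv /= ?v0 // [RHS]integral_mkcond.
  apply: eq_integral => s _ /=; rewrite /F indA /= patchE indicE /=.
  case: (ltP v s) => vs.
  + by rewrite !mem_set ?mul1r //= in_itv /= ?v0 ?vs.
  + by rewrite !memNset ?mul0r //= in_itv /= ltNge vs ?andbF.
- rewrite memNset /=; last by rewrite in_itv /= andbT; apply/negP; rewrite -ltNge.
  apply: integral0_eq => s _; rewrite /F indA indicE memNset ?mul0r //=.
  by rewrite in_itv /= leNgt v0.
Qed.

Lemma ge0_integral_reflect (h : R -> R) : measurable_fun [set: R] h ->
  (forall s, 0 <= h s) ->
  (\int[mu]_(s in `]-oo, 0%R]) ((- s) * h s)%:E =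
   \int[mu]_(s in `[0%R, +oo[) (s * h (- s))%:E)%E.
Proof.
move=> mh h0; pose k (s : R) := ((Num.max s 0) * h (- s))%:E.
have mk : measurable_fun [set: R] k.
  apply/measurable_EFinP/measurable_funM; first exact: measurable_maxr.
  exact: measurableT_comp.
have k0 s : (0 <= k s)%E by rewrite lee_fin mulr_ge0 // le_max lexx orbT.
have := ge0_integration_by_substitution0 mk k0.
have -> : (\int[mu]_(s in `[0%R, +oo[) k s =
            \int[mu]_(s in `[0%R, +oo[) (s * h (- s))%:E)%E.
  by apply: eq_integral => s; rewrite inE /= in_itv /= andbT => s0; rewrite /k max_l.
move=> ->; apply: eq_integral => s; rewrite inE /= in_itv /= => s0.
by rewrite /k opprK max_l // oppr_ge0.
Qed.

Lemma integral_survival (g : R -> R) : density_R g ->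
  (\int[mu]_(v in `]0%R, +oo[) (survival g v)%:E =
   \int[mu]_(s in `]0%R, +oo[) (s * g s)%:E)%E.
Proof.
move=> dg; have [mg [g0 _]] := dg.
rewrite integral_itv_obnd_cbnd; last by apply/measurable_EFinP; exact: measurable_survival.
rewrite [RHS]integral_itv_obnd_cbnd; last first.
  by apply/measurable_EFinP/measurable_funM => //; exact: measurable_funTS.
by rewrite layer_cake //; apply: eq_integral => v _; rewrite survivalE.
Qed.

Lemma mean_survivalE (g1 g2 : R -> R) : density_R g1 -> density_R g2 ->
  (forall v, g2 v = g1 (- v)) -> mu.-integrable setT (fun s => (s * g1 s)%:E) ->
  [/\ (\int[mu]_(v in `]0%R, +oo[) (survival g1 v)%:E \is a fin_num)%E,
      (\int[mu]_(v in `]0%R, +oo[) (survival g2 v)%:E \is a fin_num)%E &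
      (Rintegral mu setT (fun s => s * g1 s))%:E =
      (\int[mu]_(v in `]0%R, +oo[) (survival g1 v)%:E -
       \int[mu]_(v in `]0%R, +oo[) (survival g2 v)%:E)%E].
Proof.
move=> d1 d2 g21 i1; have [mg1 [g10 _]] := d1.
have m1 : measurable_fun setT (fun s : R => (s * g1 s)%:E).
  exact/measurable_EFinP/measurable_funM.
have neg : (\int[mu]_(v in `]0%R, +oo[) (survival g2 v)%:E =
            - \int[mu]_(s in `]-oo, 0%R]) (s * g1 s)%:E)%E.
  rewrite integral_survival // integral_itv_obnd_cbnd; last first.
    apply/measurable_EFinP/measurable_funM => //.
    by case: d2 => + _; exact: measurable_funTS.
  under eq_integral => s _ do rewrite g21.
  have -> : (\int[mu]_(s in `]-oo, 0%R]) (s * g1 s)%:E =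
              \int[mu]_(s in `]-oo, 0%R]) - ((- s) * g1 s)%:E)%E.
    by apply: eq_integral => s _; rewrite mulNr EFinN oppeK.
  rewrite integral_ge0N ?oppeK ?ge0_integral_reflect // => s.
  by rewrite /= in_itv /= => s0; rewrite lee_fin mulr_ge0 // oppr_ge0.
split.
- by rewrite integral_survival //; apply: integrable_fin_num => //; exact: integrableS i1.
- by rewrite neg fin_numN; apply: integrable_fin_num => //; exact: integrableS i1.
rewrite /Rintegral fineK; last exact: integrable_fin_num.
rewrite neg oppeK integral_survival // -(setUv `]-oo, 0%R]) setCitvl integral_setU //.
- by rewrite addeC.
- by rewrite -setCitvl setUv.
- by apply/disj_setPS; rewrite -setCitvl setICr.
Qed.

End first_moment.

Section ge0_le_integral_gap.
Context d (T : measurableType d) (R : realType) (mu : {measure set T -> \bar R}).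

Lemma ge0_le_integral_gap (A I : set T) (h1 h2 : T -> R) (c : R) :
  measurable A -> measurable I -> I `<=` A -> 0 <= c ->
  measurable_fun A h1 -> measurable_fun A h2 ->
  (forall x, A x -> 0 <= h2 x) -> (forall x, A x -> h2 x <= h1 x) ->
  (forall x, I x -> h2 x + c <= h1 x) ->
  (\int[mu]_(x in A) (h2 x)%:E + c%:E * mu I <= \int[mu]_(x in A) (h1 x)%:E)%E.
Proof.
move=> mA mI IA c0 m1 m2 h20 h21 h21I.
have mcI : measurable_fun A (fun x => (c * \1_I x)%:E).
  by apply/measurable_EFinP/measurable_funM => //; exact: measurable_indic.
have cI0 x : (0 <= (c * \1_I x)%:E)%E by rewrite lee_fin mulr_ge0 // indicE.
have -> : (c%:E * mu I = \int[mu]_(x in A) (c * \1_I x)%:E)%E.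
  under eq_integral => x _ do rewrite EFinM.
  rewrite ge0_integralZl ?integral_indic ?setIidl //.
  exact/measurable_EFinP/measurable_indic.
rewrite -ge0_integralD //; last exact/measurable_EFinP.
apply: ge0_le_integral => //.
- by move=> x Ax; rewrite -EFinD lee_fin addr_ge0 ?h20 // mulr_ge0 // indicE.
- under eq_fun do rewrite -EFinD.
  apply/measurable_EFinP/measurable_funD => //.
  by apply/measurable_funM => //; exact: measurable_indic.
- exact/measurable_EFinP.
move=> x Ax; rewrite -EFinD lee_fin indicE.
by have [/set_mem/h21I|] := boolP (x \in I); rewrite ?mulr1 ?mulr0 ?addr0 ?h21.
Qed.

End ge0_le_integral_gap.

Section mean_comparison.
Context {R : realType}.
Local Notation mu := (@lebesgue_measure R).
Variables g1 g2 : R -> R.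
Hypotheses (d1 : density_R g1) (d2 : density_R g2) (g21 : forall v, g2 v = g1 (- v)).
Hypothesis i1 : mu.-integrable setT (fun s => (s * g1 s)%:E).
Hypothesis survival21_le : forall v, 0 < v -> survival g2 v <= survival g1 v.

Lemma mean_ge0 : 0 <= Rintegral mu setT (fun s => s * g1 s).
Proof.
have [fin1 fin2 E] := mean_survivalE d1 d2 g21 i1.
rewrite -lee_fin E -(fineK fin1) -(fineK fin2) -EFinB lee_fin subr_ge0 -lee_fin !fineK //.
apply: ge0_le_integral => //.
- by move=> v _; rewrite lee_fin survival_ge0.
- by apply/measurable_EFinP; exact: measurable_survival.
- by apply/measurable_EFinP; exact: measurable_survival.
- by move=> v; rewrite /= in_itv /= andbT => v0; rewrite lee_fin survival21_le.
Qed.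

Lemma survival_eq_of_mean_eq0 : Rintegral mu setT (fun s => s * g1 s) = 0 ->
  forall v, 0 < v -> survival g2 v = survival g1 v.
Proof.
(* A gap at w persists on a right neighbourhood of w, where it adds a positive
   amount to the integral of the survival function of g1. *)
move=> E0 w w0; apply/eqP; rewrite eq_le survival21_le //= leNgt; apply/negP => lt21.
have [fin1 fin2 E] := mean_survivalE d1 d2 g21 i1.
pose e := (survival g1 w - survival g2 w) / 2.
have e0 : 0 < e by rewrite divr_gt0 // subr_gt0.
have [d d0 near_w] := survival_right_continuous d1 w e0.
have gap : (\int[mu]_(v in `]0%R, +oo[) (survival g2 v)%:E + e%:E * mu `]w, (w + d)%R[
             <= \int[mu]_(v in `]0%R, +oo[) (survival g1 v)%:E)%E.
  apply: ge0_le_integral_gap => //.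
  - by move=> v; rewrite /= !in_itv /= andbT => /andP[/(lt_trans w0)].
  - exact: ltW.
  - exact: measurable_survival.
  - exact: measurable_survival.
  - by move=> v _; exact: survival_ge0.
  - by move=> v; rewrite /= in_itv /= andbT => /survival21_le.
  move=> v; rewrite /= in_itv /= => wvd.
  have := near_w v wvd; have := le_survival d2 (ltW (proj1 (andP wvd))).
  rewrite /e; lra.
have int_eq : (\int[mu]_(v in `]0%R, +oo[) (survival g1 v)%:E =
               \int[mu]_(v in `]0%R, +oo[) (survival g2 v)%:E)%E.
  move: E; rewrite E0 -(fineK fin1) -(fineK fin2) -EFinB => -[] /eqP.
  by rewrite eq_sym subr_eq0 => /eqP ->.
move: gap; rewrite int_eq lebesgue_measure_itv /= lte_fin ltrDl d0 -EFinD (addrC w) addrK.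
by rewrite -(fineK fin2) -EFinM -EFinD lee_fin gerDl leNgt mulr_gt0.
Qed.

End mean_comparison.

Section choice_speed.
Context {R : realType}.
Variable r : R -> R.
Hypothesis hr : is_CF r.

Let CF_large_near0 t b : 0 < b -> exists v, [/\ 0 < v, v < b & t < r v].
Proof.
move=> b0; have [_ _ _ /cvgryPgt/(_ t) r0 _] := hr.
have : \forall v \near 0^'+, [/\ 0 < v, v < b & t < r v].
  near=> v; split; near: v; [exact: nbhs_right_gt | exact: nbhs_right_lt | exact: r0].
exact: filter_ex.
Unshelve. all: by end_near.
Qed.

Let CF_small_far t a : 0 < t -> exists v, a < v /\ r v < t.
Proof.
move=> t0; have [_ _ _ _ /cvgrPdist_lt/(_ t t0) r0] := hr.
have : \forall v \near +oo, Num.max a 0 < v /\ `|0 - r v| < t.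
  near=> v; split; near: v; [apply: nbhs_pinfty_gt; exact: num_real | exact: r0].
move=> /filter_ex[v [av rv]].
exists v; split; first by apply: le_lt_trans av; rewrite le_max lexx.
by move: rv; rewrite sub0r normrN; apply: le_lt_trans; exact: ler_norm.
Unshelve. all: by end_near.
Qed.

Let CF_continuous_itv a b : 0 < a -> {within `[a, b], continuous r}.
Proof.
move=> a0; have [rc _ _ _ _] := hr.
apply: continuous_in_subspaceT => x; rewrite inE /= in_itv /= => /andP[ax _].
exact/rc/(lt_le_trans a0 ax).
Qed.

Lemma CF_onto t : 0 < t -> exists2 v, 0 < v & r v = t.
Proof.
move=> t0; have [v0 [v00 _ tv0]] := CF_large_near0 t ltr01.
have [v1 [v01 v1t]] := CF_small_far v0 t0.
have [c] : exists2 c, c \in `[v0, v1] & r c = t.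
  apply: IVT; [exact: ltW | exact: CF_continuous_itv |].
  by rewrite ge_min le_max (ltW v1t) (ltW tv0) orbT.
rewrite in_itv /= => /andP[v0c _] rc.
by exists c => //; exact: lt_le_trans v00 v0c.
Qed.

Lemma CF_lt_zero v w : 0 < v -> 0 < r v -> 0 < w -> r w = 0 -> v < w.
Proof.
move=> v0 rv0 w0 rw0; rewrite ltNge; apply/negP => wv.
have [u [u0 uw rvu]] := CF_large_near0 (r v) w0.
have [c] : exists2 c, c \in `[u, w] & r c = r v.
  apply: IVT; [exact: ltW | exact: CF_continuous_itv |].
  by rewrite ge_min le_max rw0 (ltW rv0) (ltW rvu) orbT.
rewrite in_itv /= => /andP[uc cw] rc.
have cv : c < v.
  rewrite lt_neqAle (le_trans cw wv) andbT; apply/eqP => cv.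
  have vw : v = w by apply/eqP; rewrite eq_le wv -cv cw.
  by move: rv0; rewrite vw rw0 ltxx.
have [_ _ r_decr _ _] := hr.
by move: (r_decr c v (lt_le_trans u0 uc) cv); rewrite rc rv0 ltxx => /(_ isT isT).
Qed.

End choice_speed.

Section cdf_Rplus.
Context {R : realType}.
Local Notation mu := (@lebesgue_measure R).

Lemma cdf_Rplus0 (h : R -> R) : cdf_Rplus h 0 = 0.
Proof. by rewrite /cdf_Rplus set_itv1 Rintegral_set1. Qed.

Lemma cdf_Rplus_near0 (h : R -> R) : pos_density_Rplus h ->
  forall c, 0 < c -> exists2 t, 0 < t & cdf_Rplus h t < c.
Proof.
move=> [mh [h0 h1]] c c0.
have ih : mu.-integrable `[0%R, +oo[ (EFin \o h).
  apply/integrableP; split; first exact/measurable_EFinP/measurable_funTS.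
  under eq_integral => x.
    rewrite inE /= in_itv /= andbT => x0.
    rewrite /= ger0_norm ?ltW ?h0 //.
    over.
  by rewrite h1 ltry.
have ih01 : mu.-integrable `[0%R, 1%R] (EFin \o h).
  by apply: integrableS ih => //; apply: subset_itvl; rewrite bnd_simp.
have := parameterized_integral_cvg_left ltr01 ih01.
move=> /cvgrPdist_lt/(_ c c0)/nbhs_ballP[e /= e0 near0].
exists (e / 2); first by rewrite divr_gt0.
have : `|0 - parameterized_integral mu 0 (e / 2) h| < c.
  by apply: near0; rewrite /ball /= sub0r normrN gtr0_norm ?divr_gt0 //; lra.
by rewrite sub0r normrN; apply: le_lt_trans; exact: ler_norm.
Qed.

End cdf_Rplus.

Section rationalization.
Context {R : realType} {X : finType} (D : rel X) (p : X -> X -> R) (f : X -> X -> R -> R).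
Hypotheses (hD : wf_domain D) (hpf : is_SCFRT D p f).
Variables (u : X -> R) (g : X -> X -> R -> R) (r : R -> R).
Hypothesis hrat : rationalizes D p f u g r.

Let D_sym a b : D a b -> D b a.
Proof. by case: hD => _ [_]; apply. Qed.

Let D_neq a b : D a b -> a != b.
Proof. by case: hD => _ [+ _]; apply. Qed.

Let p_gt0 a b : D a b -> 0 < p a b.
Proof. by case: hpf => + _ => /[apply] -[]. Qed.

Let p_sum a b : D a b -> p a b + p b a = 1.
Proof. by case: hpf => + _ => /[apply] -[]. Qed.

Let f_density a b : D a b -> pos_density_Rplus (f a b).
Proof. by case: hpf => _; apply. Qed.

Let r_CF : is_CF r.
Proof. by case: hrat. Qed.

Let g_RUM a b : D a b ->
  [/\ density_R (g a b),
      (@lebesgue_measure R).-integrable setT (fun v => (v * g a b v)%:E),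
      Rintegral (@lebesgue_measure R) setT (fun v => v * g a b v) = u a - u b
    & forall v, g b a v = g a b (- v)].
Proof.
move=> Dab; have [RUM _ _] := hrat.
have [dab iab mab _ _] := RUM a b (D_neq Dab).
have [_ _ _ gba _] := RUM b a (D_neq (D_sym Dab)).
by split.
Qed.

Lemma survival_rationalized a b t v : D a b -> 0 < t -> 0 < v -> r v = t ->
  survival (g a b) v = p a b * cdf_Rplus (f a b) t.
Proof.
move=> Dab t0 v0 rvt; have [_ _ /(_ a b Dab)[g0 rat]] := hrat.
have pab : 1 - cdf_R (g a b) 0 = p a b by rewrite g0 -(p_sum Dab) addrK.
by rewrite -(rat t v) // pab mulrC divfK // gt_eqF // p_gt0.
Qed.

Lemma survival_eq0_of_CF_eq0 a b v : D a b -> 0 < v -> r v = 0 -> survival (g a b) v = 0.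
Proof.
(* No response time corresponds to v, but the survival at v is bounded by
   F(a,b)(t) for arbitrarily small t > 0. *)
move=> Dab v0 rv0; have [dab _ _ _] := g_RUM Dab.
apply/eqP; rewrite eq_le survival_ge0 // andbT; apply/ler_addgt0Pr => c c0.
have [t t0 Ft] := cdf_Rplus_near0 (f_density Dab) c0.
have [v' v'0 rv't] := CF_onto r_CF t0.
have v'v : v' < v.
  by apply: (CF_lt_zero r_CF v'0) => //; rewrite rv't.
have := survival_rationalized Dab t0 v'0 rv't.
have := le_survival dab (ltW v'v); have := survival_ge0 dab v'.
have := p_gt0 Dab; have := p_gt0 (D_sym Dab); have := p_sum Dab.
nra.
Qed.

Lemma survival_le_of_qFSD a b : D a b ->
  qFSD (p a b / p b a) (cdf_Rplus (f b a)) (cdf_Rplus (f a b)) ->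
  forall v, 0 < v -> survival (g b a) v <= survival (g a b) v.
Proof.
move=> Dab hq v v0; have Dba := D_sym Dab.
have [dab _ _ _] := g_RUM Dab.
have [_ r_ge0 _ _ _] := r_CF.
have := r_ge0 v v0; rewrite le_eqVlt => /predU1P[/esym rv0|rv0].
  by rewrite survival_eq0_of_CF_eq0 // survival_ge0.
rewrite !(survival_rationalized _ rv0 v0) //.
have pba := p_gt0 Dba.
move: (hq _ (ltW rv0)) => /(ler_wpM2l (ltW pba)).
by rewrite mulrA mulrCA mulfV ?gt_eqF // mulr1.
Qed.

Lemma Rrt_le a b : Rrt D p f a b -> u b <= u a.
Proof.
case=> [-> // | [Dab hq]]; have [dab iab mab gba] := g_RUM Dab.
have [dba _ _ _] := g_RUM (D_sym Dab).
by rewrite -subr_ge0 -mab; exact: mean_ge0 dab dba gba iab (survival_le_of_qFSD Dab hq).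
Qed.

Lemma Rrt_sym_of_eq a b : Rrt D p f a b -> u a = u b -> Rrt D p f b a.
Proof.
case=> [-> | [Dab hq]] uab; first by left.
have Dba := D_sym Dab; right; split => // t.
have [dab iab mab gba] := g_RUM Dab; have [dba _ _ _] := g_RUM Dba.
have := survival_eq_of_mean_eq0 dab dba gba iab (survival_le_of_qFSD Dab hq).
rewrite mab uab subrr => /(_ erefl) surv_eq.
rewrite le_eqVlt => /predU1P[<- | t0]; first by rewrite !cdf_Rplus0 mulr0.
have [v v0 rvt] := CF_onto r_CF t0.
have := surv_eq v v0; rewrite !(survival_rationalized _ t0 v0 rvt) // => E.
have pab := p_gt0 Dab; have pba := p_gt0 Dba.
by rewrite -(ler_pM2l pab) mulrA mulrCA mulfV ?gt_eqF // mulr1 E.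
Qed.

Lemma T_Rrt_le a b : T (Rrt D p f) a b -> u b <= u a.
Proof. by elim=> [x y /Rrt_le // | x y z _ uyx _ uzy]; exact: le_trans uzy uyx. Qed.

Lemma T_Rrt_sym_of_eq a b : T (Rrt D p f) a b -> u a = u b -> T (Rrt D p f) b a.
Proof.
elim=> [x y xy /(Rrt_sym_of_eq xy) | x y z xy IHxy yz IHyz uxz]; first exact: t_step.
have uxy : u x = u y.
  by apply/eqP; rewrite eq_le (T_Rrt_le xy) uxz (T_Rrt_le yz).
by apply: t_trans (IHyz _) (IHxy uxy); rewrite -uxy.
Qed.

End rationalization.

Theorem corollary2 (R : realType) (X : finType) (D : rel X)
  (p : X -> X -> R) (f : X -> X -> R -> R)
  (hD : wf_domain D) (hpf : is_SCFRT D p f)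
  (hrat : rationalizable D p f) (x y : X) :
  (T (Rrt D p f) x y ->
     forall u g r, rationalizes D p f u g r -> u y <= u x) /\
  (TP (Rrt D p f) x y ->
     forall u g r, rationalizes D p f u g r -> u y < u x).
Proof.
split => [xy u g r rat | [xy yx] u g r rat].
  exact (T_Rrt_le hD hpf rat xy).
rewrite (lt_neqAle (u y)) (T_Rrt_le hD hpf rat xy) andbT.
by apply/eqP => uyx; apply/yx/(T_Rrt_sym_of_eq hD hpf rat xy); rewrite uyx.
Qed.
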